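(* There is an uncountable set of triples of decision points $(d_1,d_2,d_3)\in(0,1)^3$ for each of which the triangle process has a nonperiodic trajectory.
   Context: Triangle process. Fix $\lambda_1,\lambda_2,\lambda_3>0$, $\mu_1,\mu_2,\mu_3>0$ with $\rho_i:=\lambda_i/\mu_i<1$ for each $i$ and $\rho_1+\rho_2+\rho_3>1$. Put $\theta_j:=\mu_j^{-1}(\lambda_1+\lambda_2+\lambda_3)-1$. Let $e_1,e_2,e_3$ be the standard basis of $\mathbb R^3$, $A_i^0:=\{y\in\mathbb R^3: y_1+y_2+y_3=1,\ y_i=0,\ y_l\ge0\ \forall l\}$ and $A^0:=A_1^0\cup A_2^0\cup A_3^0$. For $j\in\{1,2,3\}$ and $z\in A^0\setminus A_j^0$ let $f_j(z):=\sum_{i\neq j}\frac{(\mu_j-\lambda_j)z_i+\lambda_i z_j}{(\mu_j-\lambda_j)+\mu_j\theta_j z_j}\,e_i\in A_j^0$. Let $(\hat i,\hat j,\hat k)$ denote $(1,2,3)$ or one of its cyclic permutations; the point $(1-x)e_{\hat j}+xe_{\hat k}\in A^0_{\hat i}$, $x\in[0,1]$, is written $(x,\hat i)$, with $\mathrm{Side}((x,\hat i)):=\hat i$. Decision points are numbers $d_1,d_2,d_3\in(0,1)$, identified with the points $(d_{\hat i},\hat i)$. The switching rule is $\mathfrak R((x,\hat i))=\hat j$ if $x<d_{\hat i}$, $=\hat k$ if $x>d_{\hat i}$, and both values are allowed if $x=d_{\hat i}$. The map is $\varphi(z):=f_{\mathfrak R(z)}(z)$. A trajectory is a sequence $(z(t))_{t\ge0}$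 with $z(t+1)\in\varphi(z(t))$. It is eventually $m$-periodic if there is $N$ with $\mathrm{Side}(z(n+m))=\mathrm{Side}(z(n))$ for all $n\ge N$, and nonperiodic if it is eventually $m$-periodic for no $m\ge1$. *)

From Stdlib Require Import Reals Lra.
Open Scope R_scope.

Inductive side : Type := S1 | S2 | S3.

Definition side_eqb (i j : side) : bool :=
  match i, j with
  | S1, S1 | S2, S2 | S3, S3 => true
  | _, _ => false
  end.

(* cyclic successor: (i,j,k) = (1,2,3),(2,3,1),(3,1,2) *)
Definition succ (i : side) : side :=
  match i with S1 => S2 | S2 => S3 | S3 => S1 end.

Definition vec := side -> R.

Definition e (i : side) : vec := fun l => if side_eqb i l then 1 else 0.

Definition lamsum (lam : side -> R) : R := lam S1 + lam S2 + lam S3.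

Definition theta (lam mu : side -> R) (j : side) : R := / mu j * lamsum lam - 1.

Definition f (lam mu : side -> R) (j : side) (z : vec) : vec :=
  fun i => if side_eqb i j then 0
           else ((mu j - lam j) * z i + lam i * z j)
                / ((mu j - lam j) + mu j * theta lam mu j * z j).

(* A state (x, i) denotes the point (1-x) e_{succ i} + x e_{succ (succ i)}
   of A^0_i; Side((x,i)) = i. *)
Definition state := (side * R)%type.

Definition emb (s : state) : vec :=
  fun l => (1 - snd s) * e (succ (fst s)) l + snd s * e (succ (succ (fst s))) l.

Definition Side (s : state) : side := fst s.

Definition rule (d : side -> R) (s : state) (j : side) : Prop :=
  let i := fst s in let x := snd s in
  (x < d i /\ j = succ i) \/
  (x > d i /\ j = succ (succ i)) \/
  (x = d i /\ (j = succ i \/ j = succ (succ i))).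

Definition trajectory (lam mu d : side -> R) (z : nat -> state) : Prop :=
  (forall t, 0 <= snd (z t) <= 1) /\
  forall t, exists j, rule d (z t) j /\
    forall l, emb (z (S t)) l = f lam mu j (emb (z t)) l.

Definition eventually_periodic (z : nat -> state) (m : nat) : Prop :=
  exists N, forall n, (N <= n)%nat -> Side (z (n + m)%nat) = Side (z n).

Definition nonperiodic (z : nat -> state) : Prop :=
  forall m, (1 <= m)%nat -> ~ eventually_periodic z m.

Definition countable_set {T : Type} (S : T -> Prop) : Prop :=
  exists g : nat -> T, forall x, S x -> exists n, g n = x.

Definition uncountable_set {T : Type} (S : T -> Prop) : Prop := ~ countable_set S.

Definition dfun (d : R * R * R) : side -> R :=
  fun i => match i with S1 => fst (fst d) | S2 => snd (fst d) | S3 => snd d end.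

From Pilot Require Import Defs.
From Stdlib Require Import Reals Lra Lia Psatz Ranalysis5 Cantor.
Open Scope R_scope.

(* Write the point [(x, S1)] as [(e2 + y e3) / (1 + y)], i.e. [x = y / (1 + y)].  A return
   to side 1 through side 2 acts on [y] by an affine map [A y = a y + b], a return through
   side 3 by a Möbius map [B y = y / (a' + b' y)], and [b b' > 1].  With [d1 = c / (1 + c)]
   and [d2], [d3] chosen so that sides 2 and 3 always lead back to side 1, the process
   induces the map [T_c = A] on [y < c], [T_c = B] on [y >= c].  Since [B (A y) < A (B y)],
   [T_c] is an injective degree-one circle map of the window [[B c, A c)], so the frequency
   of [B]-steps has a rotation number [rot c], continuous in [c].  It is at most 1/3 for a
   large [c] and at least 1/2 for a small one, so every irrational value in between is
   attained; an irrational rotation number rules out an eventually periodic itinerary, and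
   the corresponding triples [(d1, d2, d3)] form an uncountable set. *)

Ltac nonzero := repeat split; apply Rgt_not_eq; nra.

Lemma div_le_div_of_mul_le x y u v : 0 < u -> 0 < v -> x * v <= y * u -> x / u <= y / v.
Proof.
  intros Hu Hv H. apply (Rmult_le_reg_r (u * v)); [nra |].
  replace (x / u * (u * v)) with (x * v) by (field; lra).
  replace (y / v * (u * v)) with (y * u) by (field; lra). exact H.
Qed.

Lemma Rabs_le_between x r : Rabs x <= r -> - r <= x <= r.
Proof.
  intros H. pose proof (Rle_abs x). pose proof (Rle_abs (- x)). rewrite Rabs_Ropp in *. lra.
Qed.

Lemma finite_positive_lower_bound (g : nat -> R) n : (forall k, (k < n)%nat -> 0 < g k) ->
  exists d, 0 < d /\ forall k, (k < n)%nat -> d <= g k.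
Proof.
  induction n as [|n IH]; intros Hg.
  - exists 1. split; [lra | intros; lia].
  - destruct IH as [d [Hd Hk]]; [intros; apply Hg; lia |].
    exists (Rmin d (g n)). split; [apply Rmin_glb_lt; auto |].
    intros k Hkn. destruct (Nat.eq_dec k n) as [-> | Hne]; [apply Rmin_r |].
    apply (Rle_trans _ d); [apply Rmin_l | apply Hk; lia].
Qed.

Lemma eq0_of_bounded_multiples e K : (forall j : nat, INR j * Rabs e <= K) -> e = 0.
Proof.
  intros H. destruct (Req_dec e 0) as [| Hne]; [easy |].
  destruct (INR_archimed (Rabs e) K) as [j Hj]; [now apply Rabs_pos_lt |].
  specialize (H j). lra.
Qed.

Definition nat_ratio (r : R) : Prop := exists q m : nat, r = INR q / INR (S m).

(** * Uncountability of irrational numbers *)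

Definition trisect (x : R) (I : R * R) : R * R :=
  let (l, r) := I in
  if Rlt_dec x ((l + r) / 2) then (l + 2 * (r - l) / 3, r) else (l, l + (r - l) / 3).

(* Cantor's nested intervals: the interval at step [n + 1] avoids [h n]. *)
Fixpoint nested_intervals (h : nat -> R) (a b : R) (n : nat) : R * R :=
  match n with
  | O => (a + (b - a) / 3, b - (b - a) / 3)
  | S n => trisect (h n) (nested_intervals h a b n)
  end.

Lemma trisect_spec x I : fst I < snd I ->
  fst I <= fst (trisect x I) < snd (trisect x I) /\ snd (trisect x I) <= snd I /\
  (x < fst (trisect x I) \/ snd (trisect x I) < x).
Proof. destruct I as [l r]. simpl. intros. unfold trisect. destruct (Rlt_dec _ _); simpl; lra. Qed.

Lemma nested_intervals_lt h a b n : a < b ->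
  fst (nested_intervals h a b n) < snd (nested_intervals h a b n).
Proof.
  intros Hab. induction n as [|n IH]; simpl; [lra |].
  pose proof (trisect_spec (h n) _ IH). lra.
Qed.

Lemma nested_intervals_mono h a b m n : a < b -> (m <= n)%nat ->
  fst (nested_intervals h a b m) <= fst (nested_intervals h a b n) /\
  snd (nested_intervals h a b n) <= snd (nested_intervals h a b m).
Proof.
  intros Hab Hmn. induction Hmn as [|n Hmn IH]; [lra |]. simpl.
  pose proof (trisect_spec (h n) _ (nested_intervals_lt h a b n Hab)). lra.
Qed.

Lemma exists_real_avoiding (h : nat -> R) a b : a < b ->
  exists r, a < r < b /\ forall n, h n <> r.
Proof.
  intros Hab.
  set (lefts := fun x => exists n, x = fst (nested_intervals h a b n)).
  assert (Hle : forall m n, fst (nested_intervals h a b m) <= snd (nested_intervals h a b n)).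
  { intros m n. pose proof (nested_intervals_mono h a b m (Nat.max m n) Hab ltac:(lia)).
    pose proof (nested_intervals_mono h a b n (Nat.max m n) Hab ltac:(lia)).
    pose proof (nested_intervals_lt h a b (Nat.max m n) Hab). lra. }
  destruct (completeness lefts) as [r [Hub Hlub]].
  - exists (snd (nested_intervals h a b 0)). intros x [n ->]. apply Hle.
  - exists (fst (nested_intervals h a b 0)). now exists 0%nat.
  - assert (Hin : forall n, fst (nested_intervals h a b n) <= r <= snd (nested_intervals h a b n)).
    { intros n. split; [apply Hub; now exists n |]. apply Hlub. intros x [m ->]. apply Hle. }
    exists r. split.
    + pose proof (Hin 0%nat). simpl in *. lra.
    + intros n E. pose proof (Hin (S n)). simpl in *.
      pose proof (trisect_spec (h n) _ (nested_intervals_lt h a b n Hab)). rewrite E in *. lra.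
Qed.

Lemma countable_image {A B : Type} (S : A -> Prop) (F : A -> B) :
  countable_set S -> countable_set (fun y => exists x, S x /\ F x = y).
Proof.
  intros [g Hg]. exists (fun n => F (g n)). intros y [x [Hx <-]].
  destruct (Hg x Hx) as [n <-]. now exists n.
Qed.

Lemma countable_subset {A : Type} (S S' : A -> Prop) :
  (forall x, S x -> S' x) -> countable_set S' -> countable_set S.
Proof. intros Hsub [g Hg]. exists g. auto. Qed.

Lemma non_ratio_interval_uncountable a b : a < b ->
  uncountable_set (fun r => a < r < b /\ ~ nat_ratio r).
Proof.
  intros Hab [g Hg].
  set (h := fun n => match Cantor.of_nat n with
                     | (O, j) => g j
                     | (S q, m) => INR q / INR (S m)
                     end).
  destruct (exists_real_avoiding h a b Hab) as [r [Hr Havoid]].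
  assert (Hnr : ~ nat_ratio r).
  { intros [q [m Hq]]. apply (Havoid (Cantor.to_nat (S q, m))).
    unfold h. now rewrite Cantor.cancel_of_to. }
  destruct (Hg r (conj Hr Hnr)) as [j Hj].
  apply (Havoid (Cantor.to_nat (O, j))). unfold h. now rewrite Cantor.cancel_of_to.
Qed.

(** * A circle map made of an affine and a Möbius branch *)

Record gap_params := GapParams { slope : R; shift : R; den0 : R; den1 : R }.

Definition gap_valid (p : gap_params) : Prop :=
  0 < slope p /\ 0 < shift p /\ 0 < den0 p /\ 0 < den1 p /\ 1 < shift p * den1 p.

Section GapMap.

Variable p : gap_params.
Hypothesis Hp : gap_valid p.

Local Notation a := (slope p).
Local Notation b := (shift p).
Local Notation a' := (den0 p).
Local Notation b' := (den1 p).

Definition affine (u : R) : R := a * u + b.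
Definition mobius (u : R) : R := u / (a' + b' * u).

Definition gap_map (c u : R) : R := if Rlt_dec u c then affine u else mobius u.
Definition letter (c u : R) : nat := if Rlt_dec u c then 0 else 1.

Fixpoint orbit (c u : R) (n : nat) : R :=
  match n with O => u | S n => gap_map c (orbit c u n) end.

Fixpoint visits (c u : R) (n : nat) : nat :=
  match n with O => O | S n => (visits c u n + letter c (orbit c u n))%nat end.

Definition admissible (c : R) : Prop := 0 < c /\ 1 < a' + b' * c.
Definition in_window (c u : R) : Prop := mobius c <= u < affine c.
Definition span (c : R) : R := affine c - mobius c.
(* The window is a circle of length [span c]; [lift c] is the degree-one lift of the
   window map, and [letter] records when the lifted point wraps around. *)
Definition lift (c u : R) : R := gap_map c u + INR (letter c u) * span c.

Ltac gap_pos := destruct Hp as (Ha & Hb & Ha' & Hb' & Hbb').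

Lemma mobius_mul y : 0 <= y -> mobius y * (a' + b' * y) = y.
Proof. intros Hy. gap_pos. unfold mobius. field. nra. Qed.

Lemma mobius_pos y : 0 < y -> 0 < mobius y.
Proof. intros Hy. gap_pos. apply Rdiv_lt_0_compat; nra. Qed.

Lemma mobius_nonneg y : 0 <= y -> 0 <= mobius y.
Proof.
  intros Hy. gap_pos. unfold mobius.
  apply Rmult_le_pos; [lra | left; apply Rinv_0_lt_compat; nra].
Qed.

Lemma mobius_lt_inv y : 0 <= y -> mobius y * b' < 1.
Proof.
  intros Hy. pose proof (mobius_mul y Hy). gap_pos.
  apply (Rmult_lt_reg_r (a' + b' * y)); nra.
Qed.

Lemma mobius_increasing y y' : 0 <= y -> y < y' -> mobius y < mobius y'.
Proof.
  intros Hy Hyy. gap_pos.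
  assert (0 < a' + b' * y) by nra. assert (0 < a' + b' * y') by nra.
  assert (E : mobius y' - mobius y = a' * (y' - y) / ((a' + b' * y) * (a' + b' * y')))
    by (unfold mobius; field; nonzero).
  assert (0 < a' * (y' - y) / ((a' + b' * y) * (a' + b' * y'))).
  { apply Rdiv_lt_0_compat; [nra | apply Rmult_lt_0_compat; lra]. }
  lra.
Qed.

Lemma mobius_le y y' : 0 <= y -> y <= y' -> mobius y <= mobius y'.
Proof.
  intros Hy [Hlt | ->]; [left; apply mobius_increasing |]; lra.
Qed.

Lemma mobius_lipschitz y y' : 0 <= y -> 0 <= y' -> mobius y' <= mobius y + Rabs (y' - y) / a'.
Proof.
  intros Hy Hy'. pose proof (Rabs_pos (y' - y)). gap_pos.
  assert (0 <= Rabs (y' - y) / a')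
    by (apply Rmult_le_pos; [lra | left; apply Rinv_0_lt_compat; lra]).
  destruct (Rle_or_lt y' y) as [Hle | Hlt].
  { pose proof (mobius_le y' y Hy' Hle). lra. }
  rewrite Rabs_right by lra.
  assert (0 <= b' * y) by nra. assert (0 <= b' * y') by nra.
  assert (E : mobius y' - mobius y = a' * (y' - y) / ((a' + b' * y) * (a' + b' * y')))
    by (unfold mobius; field; nonzero).
  assert (a' * (y' - y) / ((a' + b' * y) * (a' + b' * y')) <= a' * (y' - y) / (a' * a')).
  { apply Rmult_le_compat_l; [nra |]. apply Rinv_le_contravar; nra. }
  replace (a' * (y' - y) / (a' * a')) with ((y' - y) / a') in * by (field; lra).
  lra.
Qed.

Lemma affine_increasing y y' : y < y' -> affine y < affine y'.
Proof. intros. gap_pos. unfold affine. nra. Qed.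

Lemma affine_le y y' : y <= y' -> affine y <= affine y'.
Proof. intros. gap_pos. unfold affine. nra. Qed.

Lemma lt_affine y : 0 <= y -> y * b' < 1 -> y < affine y.
Proof.
  intros Hy Hyb. gap_pos. unfold affine.
  destruct (Rle_or_lt 1 a); [nra |].
  assert ((1 - a) * (y * b') < b * b') by nra.
  nra.
Qed.

Lemma mobius_affine_lt y : 0 <= y -> mobius (affine y) < affine (mobius y).
Proof.
  intros Hy. gap_pos. unfold affine, mobius.
  assert (D1 : 0 < a' + b' * y) by nra.
  assert (0 <= a * y) by nra.
  assert (D2 : 0 < a' + b' * (a * y + b)) by nra.
  assert (E : a * (y / (a' + b' * y)) + b - (a * y + b) / (a' + b' * (a * y + b))
           = (a * b' * (a - 1 + b * b') * y * y + b * b' * (a + a * a' + a' - 1 + b * b') * y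
              + b * a' * (a' - 1 + b * b')) / ((a' + b' * y) * (a' + b' * (a * y + b))))
    by (field; nonzero).
  assert (0 < (a * b' * (a - 1 + b * b') * y * y + b * b' * (a + a * a' + a' - 1 + b * b') * y
              + b * a' * (a' - 1 + b * b')) / ((a' + b' * y) * (a' + b' * (a * y + b)))).
  { apply Rdiv_lt_0_compat; [| nra].
    assert (0 <= a * b' * (a - 1 + b * b') * y * y) by (repeat apply Rmult_le_pos; lra).
    assert (0 <= b * b' * (a + a * a' + a' - 1 + b * b') * y) by (repeat apply Rmult_le_pos; nra).
    assert (0 < b * a' * (a' - 1 + b * b')) by (repeat apply Rmult_lt_0_compat; lra).
    lra. }
  lra.
Qed.

Lemma admissible_mobius_lt c : admissible c -> 0 < mobius c < c.
Proof.
  intros [Hc Hd]. split; [now apply mobius_pos |].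
  pose proof (mobius_mul c (Rlt_le _ _ Hc)). pose proof (mobius_pos c Hc). gap_pos.
  nra.
Qed.

Lemma affine_mobius_gt c : admissible c -> mobius c < affine (mobius c).
Proof.
  intros Hc. pose proof (admissible_mobius_lt c Hc) as Hmc.
  apply lt_affine; [lra | apply mobius_lt_inv; destruct Hc; lra].
Qed.

Lemma affine_mobius_lt c : admissible c -> affine (mobius c) < affine c.
Proof. intros Hc. apply affine_increasing, admissible_mobius_lt, Hc. Qed.

Lemma mobius_in_window c : admissible c -> in_window c (mobius c).
Proof.
  intros Hc. pose proof (affine_mobius_gt c Hc). pose proof (affine_mobius_lt c Hc).
  split; lra.
Qed.

Lemma gap_map_affine c u : u < c -> gap_map c u = affine u.
Proof. intros H. unfold gap_map. destruct (Rlt_dec u c); [easy | lra]. Qed.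

Lemma gap_map_mobius c u : c <= u -> gap_map c u = mobius u.
Proof. intros H. unfold gap_map. destruct (Rlt_dec u c); [lra | easy]. Qed.

Lemma letter_affine c u : u < c -> letter c u = 0%nat.
Proof. intros H. unfold letter. destruct (Rlt_dec u c); [easy | lra]. Qed.

Lemma letter_mobius c u : c <= u -> letter c u = 1%nat.
Proof. intros H. unfold letter. destruct (Rlt_dec u c); [lra | easy]. Qed.

Lemma gap_map_in_window c u : admissible c -> in_window c u -> in_window c (gap_map c u).
Proof.
  intros Hc [Hlo Hhi].
  pose proof (admissible_mobius_lt c Hc) as Hmc. pose proof (affine_mobius_gt c Hc).
  destruct (Rlt_le_dec u c) as [Hu | Hu].
  - rewrite gap_map_affine by easy.
    pose proof (affine_le _ _ Hlo). pose proof (affine_increasing _ _ Hu). split; lra.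
  - rewrite gap_map_mobius by easy.
    pose proof (mobius_le c u ltac:(lra) Hu).
    pose proof (mobius_increasing u (affine c) ltac:(lra) Hhi).
    pose proof (mobius_affine_lt c ltac:(lra)). pose proof (affine_mobius_lt c Hc).
    split; lra.
Qed.

Lemma orbit_in_window c u n : admissible c -> in_window c u -> in_window c (orbit c u n).
Proof. intros Hc Hu. induction n; simpl; auto using gap_map_in_window. Qed.

Lemma gap_map_injective c u u' : admissible c -> in_window c u -> in_window c u' ->
  gap_map c u = gap_map c u' -> u = u'.
Proof.
  intros Hc Hu Hu' E.
  assert (Hneq : forall v v', in_window c v -> in_window c v' -> v < v' ->
            gap_map c v <> gap_map c v').
  { intros v v' [Hv _] [_ Hv'] Hlt.
    pose proof (admissible_mobius_lt c Hc) as Hmc.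
    destruct (Rlt_le_dec v' c) as [H' | H'].
    - rewrite !gap_map_affine by lra. pose proof (affine_increasing _ _ Hlt). lra.
    - destruct (Rlt_le_dec v c) as [H | H].
      + rewrite gap_map_affine, gap_map_mobius by lra.
        pose proof (affine_le _ _ Hv). pose proof (mobius_increasing v' (affine c) ltac:(lra) Hv').
        pose proof (mobius_affine_lt c ltac:(lra)). lra.
      + rewrite !gap_map_mobius by lra. pose proof (mobius_increasing v v' ltac:(lra) Hlt). lra. }
  destruct (Rtotal_order u u') as [H | [H | H]]; auto.
  - now destruct (Hneq u u' Hu Hu' H).
  - now destruct (Hneq u' u Hu' Hu H).
Qed.

Lemma orbit_injective c u u' n : admissible c -> in_window c u -> in_window c u' ->
  orbit c u n = orbit c u' n -> u = u'.
Proof.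
  intros Hc Hu Hu'. induction n as [|n IH]; simpl; auto.
  intros E. apply IH, (gap_map_injective c); auto using orbit_in_window.
Qed.

Lemma lift_le c u u' : admissible c -> in_window c u -> in_window c u' -> u <= u' ->
  lift c u <= lift c u'.
Proof.
  intros Hc [Hu _] [_ Hu'] Hle. unfold lift, span.
  pose proof (admissible_mobius_lt c Hc) as Hmc.
  destruct (Rlt_le_dec u' c) as [Hc' | Hc'].
  - rewrite !letter_affine, !gap_map_affine by lra. simpl. pose proof (affine_le _ _ Hle). lra.
  - destruct (Rlt_le_dec u c) as [Hc0 | Hc0].
    + rewrite letter_affine, letter_mobius, gap_map_affine, gap_map_mobius by lra. simpl.
      pose proof (affine_increasing _ _ Hc0). pose proof (mobius_le c u' ltac:(lra) Hc'). lra.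
    + rewrite !letter_mobius, !gap_map_mobius by lra.
      pose proof (mobius_le u u' ltac:(lra) Hle). lra.
Qed.

Lemma lift_range c u : admissible c -> in_window c u ->
  affine (mobius c) <= lift c u < affine (mobius c) + span c.
Proof.
  intros Hc [Hlo Hhi]. unfold lift, span.
  pose proof (admissible_mobius_lt c Hc) as Hmc. pose proof (affine_mobius_gt c Hc).
  pose proof (affine_mobius_lt c Hc).
  destruct (Rlt_le_dec u c) as [Hu | Hu].
  - rewrite letter_affine, gap_map_affine by lra. simpl.
    pose proof (affine_le _ _ Hlo). pose proof (affine_increasing _ _ Hu). lra.
  - rewrite letter_mobius, gap_map_mobius by lra. simpl.
    pose proof (mobius_le c u ltac:(lra) Hu).
    pose proof (mobius_increasing u (affine c) ltac:(lra) Hhi).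
    pose proof (mobius_affine_lt c ltac:(lra)). lra.
Qed.

Lemma lift_step_le c u u' (k k' : nat) : admissible c -> in_window c u -> in_window c u' ->
  u + INR k * span c <= u' + INR k' * span c ->
  gap_map c u + INR (k + letter c u) * span c <= gap_map c u' + INR (k' + letter c u') * span c.
Proof.
  intros Hc Hu Hu' Hle. rewrite !plus_INR.
  pose proof (lift_range c u Hc Hu). pose proof (lift_range c u' Hc Hu').
  destruct Hu as [Hu1 Hu2], Hu' as [Hu1' Hu2']. unfold lift, span in *.
  destruct (Nat.lt_total k k') as [Hlt | [-> | Hgt]].
  - assert (INR k + 1 <= INR k') by (rewrite <- S_INR; apply le_INR; lia). nra.
  - assert (Huu : u <= u') by lra.
    pose proof (lift_le c u u' Hc (conj Hu1 Hu2) (conj Hu1' Hu2') Huu). unfold lift, span in *. lra.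
  - assert (INR k' + 1 <= INR k) by (rewrite <- S_INR; apply le_INR; lia). nra.
Qed.

Lemma orbit_lift_le c u u' (k k' : nat) n : admissible c -> in_window c u -> in_window c u' ->
  u + INR k * span c <= u' + INR k' * span c ->
  orbit c u n + INR (k + visits c u n) * span c <= orbit c u' n + INR (k' + visits c u' n) * span c.
Proof.
  intros Hc Hu Hu' Hle. induction n as [|n IH]; simpl.
  - now rewrite !Nat.add_0_r.
  - rewrite !Nat.add_assoc. apply lift_step_le; auto using orbit_in_window.
Qed.

Lemma visits_le_succ c u u' n : admissible c -> in_window c u -> in_window c u' ->
  (visits c u n <= visits c u' n + 1)%nat.
Proof.
  intros Hc Hu Hu'.
  assert (Hsp : 0 < span c).
  { unfold span. pose proof (affine_mobius_gt c Hc). pose proof (affine_mobius_lt c Hc). lra. }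
  assert (H0 : u + INR 0 * span c <= u' + INR 1 * span c).
  { destruct Hu, Hu'. unfold span in *. simpl. lra. }
  pose proof (orbit_lift_le c u u' 0 1 n Hc Hu Hu' H0) as M.
  destruct (orbit_in_window c u n Hc Hu), (orbit_in_window c u' n Hc Hu').
  rewrite Nat.add_0_l, plus_INR in M. change (INR 1) with 1 in M.
  assert (Hi : INR (visits c u n) < INR (visits c u' n + 2)).
  { rewrite plus_INR. simpl. apply (Rmult_lt_reg_r (span c)); [easy |].
    assert (span c = affine c - mobius c) by reflexivity. lra. }
  apply INR_lt in Hi. lia.
Qed.

Lemma orbit_add c u m n : orbit c u (m + n) = orbit c (orbit c u m) n.
Proof.
  induction n as [|n IH]; [now rewrite Nat.add_0_r |].
  rewrite Nat.add_succ_r. simpl. congruence.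
Qed.

Lemma visits_add c u m n : visits c u (m + n) = (visits c u m + visits c (orbit c u m) n)%nat.
Proof.
  induction n as [|n IH]; [rewrite Nat.add_0_r; simpl; lia |].
  rewrite Nat.add_succ_r. simpl. rewrite IH, orbit_add. lia.
Qed.

Lemma visits_le c u n : (visits c u n <= n)%nat.
Proof. induction n; simpl; [lia | unfold letter; destruct (Rlt_dec _ _); lia]. Qed.

Definition base_visits (c : R) (n : nat) : nat := visits c (mobius c) n.

Lemma visits_near_base c u n : admissible c -> in_window c u ->
  (visits c u n <= base_visits c n + 1 /\ base_visits c n <= visits c u n + 1)%nat.
Proof.
  intros Hc Hu. pose proof (mobius_in_window c Hc).
  split; apply visits_le_succ; auto.
Qed.

Lemma base_visits_add c m n : admissible c ->
  (base_visits c (m + n) <= base_visits c m + base_visits c n + 1 /\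
   base_visits c m + base_visits c n <= base_visits c (m + n) + 1)%nat.
Proof.
  intros Hc.
  pose proof (orbit_in_window c (mobius c) m Hc (mobius_in_window c Hc)) as Hw.
  pose proof (visits_near_base _ _ n Hc Hw).
  unfold base_visits in *. rewrite visits_add. lia.
Qed.

Lemma base_visits_mul c m k : admissible c ->
  (base_visits c (k * m) <= k * base_visits c m + k /\
   k * base_visits c m <= base_visits c (k * m) + k)%nat.
Proof.
  intros Hc. induction k as [|k IH]; [unfold base_visits; simpl; lia |].
  rewrite !Nat.mul_succ_l. pose proof (base_visits_add c (k * m) m Hc). lia.
Qed.

Lemma base_visits_cross c m n : admissible c ->
  (m * base_visits c n <= n * base_visits c m + n + m)%nat.
Proof.
  intros Hc. destruct (base_visits_mul c n m Hc) as [_ H1].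
  destruct (base_visits_mul c m n Hc) as [H2 _]. rewrite Nat.mul_comm in H2. lia.
Qed.

Definition rot_ratios (c r : R) : Prop :=
  exists n : nat, r = (INR (base_visits c (S n)) - 1) / INR (S n).

Lemma rot_ratios_bound c : bound (rot_ratios c).
Proof.
  exists 1. intros r [n ->].
  pose proof (le_INR _ _ (visits_le c (mobius c) (S n))). pose proof (pos_INR n).
  rewrite S_INR in *. unfold base_visits.
  apply (Rle_trans _ ((INR n + 1) / (INR n + 1))).
  - apply div_le_div_of_mul_le; nra.
  - right. field. lra.
Qed.

Lemma rot_ratios_nonempty c : exists r, rot_ratios c r.
Proof. eexists. exists O. reflexivity. Qed.

(* The rotation number: the asymptotic frequency of the Möbius branch along the base orbit. *)
Definition rot (c : R) : R :=
  proj1_sig (completeness (rot_ratios c) (rot_ratios_bound c) (rot_ratios_nonempty c)).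

Lemma rot_spec c n : admissible c -> (1 <= n)%nat ->
  Rabs (INR (base_visits c n) - INR n * rot c) <= 1.
Proof.
  intros Hc Hn. unfold rot. destruct (completeness _ _ _) as [r [Hub Hlub]]. cbn [proj1_sig].
  destruct n as [|n]; [lia |].
  assert (Hpos : 0 < INR (S n)) by (apply lt_0_INR; lia).
  assert (Hlo : (INR (base_visits c (S n)) - 1) / INR (S n) <= r) by (apply Hub; now exists n).
  assert (Hhi : r <= (INR (base_visits c (S n)) + 1) / INR (S n)).
  { apply Hlub. intros x [m ->].
    pose proof (le_INR _ _ (base_visits_cross c (S n) (S m) Hc)) as K.
    rewrite !plus_INR, !mult_INR in K.
    apply div_le_div_of_mul_le; [apply lt_0_INR; lia | easy | nra]. }
  apply Rmult_le_compat_r with (r := INR (S n)) in Hlo, Hhi; try lra.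
  replace ((INR (base_visits c (S n)) - 1) / INR (S n) * INR (S n))
    with (INR (base_visits c (S n)) - 1) in Hlo by (field; lra).
  replace ((INR (base_visits c (S n)) + 1) / INR (S n) * INR (S n))
    with (INR (base_visits c (S n)) + 1) in Hhi by (field; lra).
  apply Rabs_le. lra.
Qed.

(* Bisection: the two halves cannot both need their witness sent to [c] at time [n],
   because the window map is injective. *)
Lemma exists_orbit_avoiding c n u0 u1 : admissible c ->
  mobius c <= u0 -> u0 < u1 -> u1 <= affine c ->
  exists u, u0 < u < u1 /\ forall k, (k < n)%nat -> orbit c u k <> c.
Proof.
  intros Hc. revert u0 u1. induction n as [|n IH]; intros u0 u1 H0 H01 H1.
  - exists ((u0 + u1) / 2). split; [lra | intros; lia].
  - destruct (IH u0 ((u0 + u1) / 2)) as [v [Hv Av]]; try lra.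
    destruct (IH ((u0 + u1) / 2) u1) as [w [Hw Aw]]; try lra.
    assert (Hext : forall x, (forall k, (k < n)%nat -> orbit c x k <> c) -> orbit c x n <> c ->
              forall k, (k < S n)%nat -> orbit c x k <> c).
    { intros x Ax Hx k Hk. destruct (Nat.eq_dec k n) as [-> | Hne]; auto. apply Ax. lia. }
    destruct (Req_dec (orbit c v n) c) as [Ev | Ev]; [| exists v; split; [lra | auto]].
    destruct (Req_dec (orbit c w n) c) as [Ew | Ew]; [| exists w; split; [lra | auto]].
    assert (v = w) by (apply (orbit_injective c v w n Hc); [split | split | congruence]; lra).
    lra.
Qed.

Lemma orbit_agree c c' u n :
  (forall k, (k < n)%nat -> (orbit c u k < c <-> orbit c u k < c')) ->
  orbit c' u n = orbit c u n /\ visits c' u n = visits c u n.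
Proof.
  induction n as [|n IH]; intros H; [easy |].
  destruct IH as [E1 E2]; [intros; apply H; lia |].
  specialize (H n ltac:(lia)). simpl. rewrite E1, E2. unfold gap_map, letter.
  destruct (Rlt_dec (orbit c u n) c), (Rlt_dec (orbit c u n) c'); tauto.
Qed.

Lemma window_nbhd c u : admissible c -> mobius c < u < affine c ->
  exists eta, 0 < eta /\ forall c', Rabs (c' - c) < eta -> admissible c' /\ in_window c' u.
Proof.
  intros [Hc Hd] [Hlo Hhi]. gap_pos.
  set (e1 := (a' + b' * c - 1) / b'). set (e2 := a' * (u - mobius c)).
  set (e3 := (affine c - u) / a).
  assert (0 < e1) by (apply Rdiv_lt_0_compat; lra).
  assert (0 < e2) by (apply Rmult_lt_0_compat; lra).
  assert (0 < e3) by (apply Rdiv_lt_0_compat; lra).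
  exists (Rmin (Rmin c e1) (Rmin e2 e3)).
  split; [repeat apply Rmin_glb_lt; auto |].
  intros c' Hc'. pose proof (Rabs_def2 _ _ Hc') as Hcc.
  pose proof (Rmin_l (Rmin c e1) (Rmin e2 e3)). pose proof (Rmin_r (Rmin c e1) (Rmin e2 e3)).
  pose proof (Rmin_l c e1). pose proof (Rmin_r c e1).
  pose proof (Rmin_l e2 e3). pose proof (Rmin_r e2 e3).
  assert (b' * e1 = a' + b' * c - 1) by (unfold e1; field; lra).
  assert (a * e3 = affine c - u) by (unfold e3; field; lra).
  repeat split.
  - lra.
  - nra.
  - pose proof (mobius_lipschitz c c' ltac:(lra) ltac:(lra)).
    assert (Rabs (c' - c) / a' < u - mobius c).
    { apply (Rmult_lt_reg_r a'); [lra |]. unfold Rdiv. rewrite Rmult_assoc, Rinv_l by lra.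
      unfold e2 in *. lra. }
    lra.
  - unfold affine in *. nra.
Qed.

Lemma rot_close c c' n : admissible c -> admissible c' -> (1 <= n)%nat ->
  (base_visits c n <= base_visits c' n + 2)%nat -> (base_visits c' n <= base_visits c n + 2)%nat ->
  INR n * Rabs (rot c' - rot c) <= 4.
Proof.
  intros Hc Hc' Hn H1 H2.
  pose proof (rot_spec c n Hc Hn). pose proof (rot_spec c' n Hc' Hn).
  apply le_INR in H1, H2. rewrite plus_INR in H1, H2. change (INR 2) with 2 in H1, H2.
  rewrite <- (Rabs_right (INR n)) by (apply Rle_ge, pos_INR).
  rewrite <- Rabs_mult.
  apply Rabs_le. apply Rabs_le_between in H. apply Rabs_le_between in H0. lra.
Qed.

Lemma rot_continuous c : admissible c -> continuity_pt rot c.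
Proof.
  intros Hc eps Heps.
  destruct (archimed_cor1 (eps / 4) ltac:(lra)) as [n [Hn Hn0]].
  pose proof (mobius_in_window c Hc) as [_ Hwin].
  destruct (exists_orbit_avoiding c n (mobius c) (affine c) Hc (Rle_refl _) Hwin (Rle_refl _))
    as [u [Hu Avoid]].
  destruct (finite_positive_lower_bound (fun k => Rabs (orbit c u k - c)) n) as [dl [Hdl Hdk]].
  { intros k Hk. apply Rabs_pos_lt. specialize (Avoid k Hk). lra. }
  destruct (window_nbhd c u Hc Hu) as [eta [Heta Hnbhd]].
  exists (Rmin dl eta). split; [now apply Rmin_glb_lt |].
  intros c' [_ Hcc']. simpl in *. unfold R_dist in *.
  destruct (Hnbhd c' ltac:(pose proof (Rmin_r dl eta); lra)) as [Hc' Hu'].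
  assert (Hclose : Rabs (c' - c) < dl) by (pose proof (Rmin_l dl eta); lra).
  destruct (orbit_agree c c' u n) as [_ Evis].
  { intros k Hk. specialize (Hdk k Hk). simpl in Hdk.
    apply Rabs_def2 in Hclose. destruct (Rle_or_lt (orbit c u k) c).
    - rewrite Rabs_left1 in Hdk by lra. split; intros; lra.
    - rewrite Rabs_right in Hdk by lra. split; intros; lra. }
  assert (Hw : in_window c u) by (unfold in_window; lra).
  pose proof (visits_near_base c u n Hc Hw). pose proof (visits_near_base c' u n Hc' Hu').
  rewrite Evis in *.
  pose proof (rot_close c c' n Hc Hc' ltac:(lia) ltac:(lia) ltac:(lia)) as Hrot.
  assert (0 < INR n) by (apply lt_0_INR; lia).
  apply (Rmult_lt_reg_l (INR n)); [easy |].
  assert (1 < INR n * (eps / 4)).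
  { rewrite <- (Rinv_r (INR n)) by lra. apply Rmult_lt_compat_l; lra. }
  lra.
Qed.

Lemma visits_all_affine c u n : (forall k, (k < n)%nat -> orbit c u k < c) -> visits c u n = 0%nat.
Proof.
  induction n as [|n IH]; intros H; [easy |]. simpl.
  rewrite IH, letter_affine by (auto; apply H; lia). easy.
Qed.

Lemma visits_all_mobius c u n : (forall k, (k < n)%nat -> c <= orbit c u k) -> visits c u n = n.
Proof.
  induction n as [|n IH]; intros H; [easy |]. simpl.
  rewrite IH, letter_mobius by (auto; apply H; lia). lia.
Qed.

Lemma admissible_le c c' : admissible c -> c <= c' -> admissible c'.
Proof. intros [Hc Hd] Hle. pose proof Hp as (_ & _ & _ & Hb' & _). split; nra. Qed.

Lemma admissible_mobius y : admissible y -> admissible (mobius y) /\ mobius y < y.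
Proof.
  intros Hy. pose proof (admissible_mobius_lt y Hy) as [Hq Hqy]. split; [| easy].
  destruct Hy as [Hy Hd]. pose proof (mobius_mul y (Rlt_le _ _ Hy)). gap_pos.
  split; [easy |].
  assert ((a' + b' * mobius y - 1) * (a' + b' * y) = a' * (a' + b' * y - 1)) by nra.
  assert (0 < (a' + b' * mobius y - 1) * (a' + b' * y)) by nra.
  nra.
Qed.

(* The base orbit of [c_high] stays below [c_high] for three steps, so [rot c_high <= 1/3];
   that of [c_low] is above [b > mobius b > c_low] after one step and then stays above
   [c_low] for three Möbius steps, so [rot c_low >= 1/2]. *)
Definition c_low : R := mobius (mobius b).
Definition c_high : R := (1 + a + a * a) / b' + b * (1 + a) + 1.

Lemma admissible_shift : admissible b.
Proof. gap_pos. split; nra. Qed.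

Lemma admissible_c_low : admissible c_low.
Proof. apply admissible_mobius, admissible_mobius, admissible_shift. Qed.

Lemma c_low_lt_c_high : c_low < c_high.
Proof.
  gap_pos.
  assert (Hlow : c_low * b' < 1) by (apply mobius_lt_inv, mobius_nonneg; lra).
  assert (E : c_high * b' = 1 + a + a * a + b' * (b * (1 + a) + 1)) by (unfold c_high; field; lra).
  assert (0 < b' * (b * (1 + a) + 1)) by nra.
  apply (Rmult_lt_reg_r b'); nra.
Qed.

Lemma admissible_c_high : admissible c_high.
Proof. apply (admissible_le c_low); [apply admissible_c_low | apply Rlt_le, c_low_lt_c_high]. Qed.

Lemma rot_c_high : rot c_high <= 1 / 3.
Proof.
  pose proof admissible_c_high as Hc.
  set (m := mobius c_high).
  pose proof (admissible_mobius_lt _ Hc) as [Hm0 Hm].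
  pose proof (mobius_lt_inv c_high (Rlt_le _ _ (proj1 Hc))) as Hmb. fold m in Hm0, Hm, Hmb.
  gap_pos.
  assert (E : c_high * b' = 1 + a + a * a + b' * (b * (1 + a) + 1)) by (unfold c_high; field; lra).
  assert (H1 : affine m < c_high).
  { apply (Rmult_lt_reg_r b'); [easy |]. unfold affine. nra. }
  assert (H2 : affine (affine m) < c_high).
  { apply (Rmult_lt_reg_r b'); [easy |]. unfold affine. nra. }
  assert (Hvis : base_visits c_high 3 = 0%nat).
  { apply visits_all_affine. intros k Hk.
    destruct k as [|[|[|k]]]; simpl; [easy | | | lia].
    - now rewrite gap_map_affine.
    - now rewrite (gap_map_affine _ m), (gap_map_affine _ (affine m)). }
  pose proof (rot_spec c_high 3 Hc ltac:(lia)) as Hspec. rewrite Hvis in Hspec.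
  apply Rabs_le_between in Hspec. simpl in Hspec. lra.
Qed.

Lemma rot_c_low : 1 / 2 <= rot c_low.
Proof.
  pose proof admissible_shift as Hb0.
  destruct (admissible_mobius b Hb0) as [Hc1 Hc1b].
  destruct (admissible_mobius (mobius b) Hc1) as [Hc Hcc1]. fold c_low in Hc, Hcc1.
  set (m := mobius c_low).
  pose proof (admissible_mobius_lt _ Hc) as [Hm0 Hm]. fold m in Hm0, Hm.
  assert (Hv : b <= affine m) by (gap_pos; unfold affine; nra).
  assert (Hvis : base_visits c_low 4 = 3%nat).
  { unfold base_visits. fold m.
    rewrite (visits_add _ _ 1 3), (visits_all_mobius _ (orbit c_low m 1) 3).
    - simpl. rewrite letter_affine; easy.
    - intros k Hk. simpl. rewrite gap_map_affine by easy.
      pose proof (proj1 Hb0).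
      assert (Hb1 : mobius b <= mobius (affine m)) by (apply mobius_le; lra).
      assert (c_low <= mobius (mobius (affine m))).
      { apply mobius_le; [apply mobius_nonneg; lra | exact Hb1]. }
      destruct k as [|[|[|k]]]; simpl; [lra | | | lia].
      + rewrite gap_map_mobius; lra.
      + rewrite (gap_map_mobius _ (affine m)), (gap_map_mobius _ (mobius (affine m))); lra. }
  pose proof (rot_spec c_low 4 Hc ltac:(lia)) as Hspec. rewrite Hvis in Hspec.
  apply Rabs_le_between in Hspec. simpl in Hspec. lra.
Qed.

Lemma rot_attains r : 1 / 3 < r < 1 / 2 -> exists c, c_low <= c <= c_high /\ rot c = r.
Proof.
  intros Hr.
  destruct (IVT_interv (fct_cte r - rot)%F c_low c_high) as [c [Hc Ec]].
  - intros x Hx. apply continuity_pt_minus; [apply continuity_pt_const; now intros ? ? |].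
    apply rot_continuous, (admissible_le c_low); [apply admissible_c_low | lra].
  - apply c_low_lt_c_high.
  - pose proof rot_c_low. unfold minus_fct, fct_cte. lra.
  - pose proof rot_c_high. unfold minus_fct, fct_cte. lra.
  - exists c. split; [easy |]. unfold minus_fct, fct_cte in Ec. lra.
Qed.

Lemma base_visits_periodic c N0 m :
  (forall k, (N0 <= k)%nat ->
     letter c (orbit c (mobius c) (k + m)) = letter c (orbit c (mobius c) k)) ->
  forall j, base_visits c (N0 + j * m) =
            (base_visits c N0 + j * (base_visits c (N0 + m) - base_visits c N0))%nat.
Proof.
  intros Hper.
  set (Q := (base_visits c (N0 + m) - base_visits c N0)%nat).
  assert (Hmono : (base_visits c N0 <= base_visits c (N0 + m))%nat)
    by (unfold base_visits; rewrite visits_add; lia).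
  assert (Shift : forall i, base_visits c (N0 + i + m) = (base_visits c (N0 + i) + Q)%nat).
  { induction i as [|i IH]; [rewrite Nat.add_0_r; unfold Q; lia |].
    replace (N0 + S i + m)%nat with (S (N0 + i + m)) by lia.
    replace (N0 + S i)%nat with (S (N0 + i)) by lia.
    unfold base_visits in *. simpl. rewrite IH, Hper by lia. lia. }
  induction j as [|j IH]; [now rewrite Nat.mul_0_l, !Nat.add_0_r |].
  replace (N0 + S j * m)%nat with (N0 + j * m + m)%nat by lia.
  rewrite Shift, IH. lia.
Qed.

Lemma rot_nat_ratio_of_periodic c N0 m : admissible c -> (1 <= m)%nat ->
  (forall k, (N0 <= k)%nat ->
     letter c (orbit c (mobius c) (k + m)) = letter c (orbit c (mobius c) k)) ->
  nat_ratio (rot c).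
Proof.
  intros Hc Hm Hper.
  assert (Hper' : forall k, (S N0 <= k)%nat ->
     letter c (orbit c (mobius c) (k + m)) = letter c (orbit c (mobius c) k))
    by (intros; apply Hper; lia).
  pose proof (base_visits_periodic c (S N0) m Hper') as Hlin.
  set (Q := (base_visits c (S N0 + m) - base_visits c (S N0))%nat) in Hlin.
  assert (He : INR Q - INR m * rot c = 0).
  { apply (eq0_of_bounded_multiples _ 2). intros j.
    pose proof (rot_spec c (S N0 + j * m) Hc ltac:(lia)) as A1.
    pose proof (rot_spec c (S N0) Hc ltac:(lia)) as A2.
    rewrite Hlin, !plus_INR, !mult_INR in A1.
    rewrite <- (Rabs_right (INR j)) by (apply Rle_ge, pos_INR). rewrite <- Rabs_mult.
    apply Rabs_le_between in A1, A2. apply Rabs_le. lra. }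
  destruct m as [|m']; [lia |].
  exists Q, m'. pose proof (lt_0_INR (S m') ltac:(lia)).
  apply (Rmult_eq_reg_r (INR (S m'))); [| lra]. field_simplify; lra.
Qed.

End GapMap.

(** * The triangle process *)

Definition ratio_point (y : R) : R := y / (1 + y).

Lemma ratio_point_in_unit y : 0 < y -> 0 < ratio_point y < 1.
Proof.
  intros Hy. unfold ratio_point. split; [apply Rdiv_lt_0_compat; lra |].
  apply (Rmult_lt_reg_r (1 + y)); [lra |]. field_simplify; lra.
Qed.

Lemma ratio_point_increasing y y' : 0 <= y -> y < y' -> ratio_point y < ratio_point y'.
Proof.
  intros Hy Hyy. unfold ratio_point.
  assert (E : y' / (1 + y') - y / (1 + y) = (y' - y) / ((1 + y) * (1 + y'))) by (field; lra).
  assert (0 < (y' - y) / ((1 + y) * (1 + y'))) by (apply Rdiv_lt_0_compat; nra).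
  lra.
Qed.

Lemma ratio_point_inv y : 0 < y -> ratio_point y / (1 - ratio_point y) = y.
Proof. intros Hy. unfold ratio_point. field. lra. Qed.

Section Triangle.

Variables lam mu : side -> R.
Hypothesis Hlam : forall i, 0 < lam i.
Hypothesis Hlt : forall i, lam i < mu i.

Definition triangle_params : gap_params :=
  GapParams ((mu S1 - lam S1) * (mu S2 - lam S2) / (lam S1 * lam S2))
            (lam S3 * mu S1 / (lam S1 * lam S2))
            ((mu S1 - lam S1) * (mu S3 - lam S3) / (lam S1 * lam S3))
            (lam S2 * mu S1 / (lam S1 * lam S3)).

Local Notation P := triangle_params.

Ltac rates := pose proof (Hlam S1); pose proof (Hlam S2); pose proof (Hlam S3);
              pose proof (Hlt S1); pose proof (Hlt S2); pose proof (Hlt S3).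

Lemma triangle_params_valid : gap_valid P.
Proof.
  rates. unfold gap_valid, P; simpl.
  repeat split; try (apply Rdiv_lt_0_compat; nra).
  replace (lam S3 * mu S1 / (lam S1 * lam S2) * (lam S2 * mu S1 / (lam S1 * lam S3)))
    with ((mu S1 / lam S1) * (mu S1 / lam S1)) by (field; lra).
  assert (1 < mu S1 / lam S1).
  { apply (Rmult_lt_reg_r (lam S1)); [lra |]. field_simplify; lra. }
  nra.
Qed.

Definition side2_point (y : R) : R := lam S1 / ((mu S2 - lam S2) * y + lamsum lam - lam S2).
Definition side3_gap (y : R) : R := lam S1 * y / ((mu S3 - lam S3) + (lam S1 + lam S2) * y).

Lemma f_S1_to_S2 y : 0 < y ->
  forall l, emb (S2, side2_point y) l = Defs.f lam mu S2 (emb (S1, ratio_point y)) l.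
Proof.
  intros Hy l. rates. assert (0 < (mu S2 - lam S2) * y) by nra.
  destruct l; unfold emb, Defs.f, e, theta, side2_point, ratio_point, lamsum; simpl; field; nonzero.
Qed.

Lemma f_S2_to_S1 y : 0 < y ->
  forall l, emb (S1, ratio_point (affine P y)) l = Defs.f lam mu S1 (emb (S2, side2_point y)) l.
Proof.
  intros Hy l. rates.
  assert (0 < (mu S2 - lam S2) * y) by nra.
  assert (0 < (mu S1 - lam S1) * (mu S2 - lam S2) * y) by (apply Rmult_lt_0_compat; nra).
  assert (0 < lam S1 * lam S2) by nra. assert (0 < lam S3 * mu S1) by nra.
  destruct l; unfold emb, Defs.f, e, theta, side2_point, ratio_point, lamsum, affine, P; simpl;
    field; nonzero.
Qed.

Lemma f_S1_to_S3 y : 0 < y ->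
  forall l, emb (S3, 1 - side3_gap y) l = Defs.f lam mu S3 (emb (S1, ratio_point y)) l.
Proof.
  intros Hy l. rates.
  assert (0 < (mu S3 - lam S3) * y) by nra. assert (0 < lam S1 * y) by nra.
  assert (0 < lam S2 * y) by nra.
  destruct l; unfold emb, Defs.f, e, theta, side3_gap, ratio_point, lamsum; simpl; field; nonzero.
Qed.

Lemma f_S3_to_S1 y : 0 < y ->
  forall l, emb (S1, ratio_point (mobius P y)) l = Defs.f lam mu S1 (emb (S3, 1 - side3_gap y)) l.
Proof.
  intros Hy l. rates.
  assert (0 < (mu S3 - lam S3) * y) by nra. assert (0 < lam S1 * y) by nra.
  assert (0 < lam S2 * y) by nra.
  assert (0 < (mu S1 - lam S1) * (mu S3 - lam S3)) by nra.
  assert (0 < lam S1 * lam S3) by nra.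
  assert (0 < lam S2 * mu S1 * y) by (apply Rmult_lt_0_compat; nra).
  destruct l; unfold emb, Defs.f, e, theta, side3_gap, ratio_point, lamsum, mobius, P; simpl;
    field; nonzero.
Qed.

Lemma side2_point_in_unit y : 0 < y -> 0 < side2_point y < 1.
Proof.
  intros Hy. rates. assert (0 < (mu S2 - lam S2) * y) by nra.
  unfold side2_point, lamsum. split; [apply Rdiv_lt_0_compat; lra |].
  apply (Rmult_lt_reg_r ((mu S2 - lam S2) * y + (lam S1 + lam S2 + lam S3) - lam S2)); [lra |].
  field_simplify; lra.
Qed.

Lemma side2_point_antitone y y' : 0 < y -> y <= y' -> side2_point y' <= side2_point y.
Proof.
  intros Hy Hyy. rates.
  assert ((mu S2 - lam S2) * y <= (mu S2 - lam S2) * y') by (apply Rmult_le_compat_l; lra).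
  unfold side2_point, lamsum. apply div_le_div_of_mul_le; nra.
Qed.

Lemma side3_gap_in_unit y : 0 < y -> 0 < side3_gap y < 1.
Proof.
  intros Hy. rates. assert (0 < lam S1 * y) by nra. assert (0 < lam S2 * y) by nra.
  unfold side3_gap. split; [apply Rdiv_lt_0_compat; nra |].
  apply (Rmult_lt_reg_r ((mu S3 - lam S3) + (lam S1 + lam S2) * y)); [nra |].
  field_simplify; nra.
Qed.

Lemma side3_gap_monotone y y' : 0 < y -> y <= y' -> side3_gap y <= side3_gap y'.
Proof.
  intros Hy Hyy. rates. unfold side3_gap.
  assert (0 <= lam S1 * (mu S3 - lam S3) * (y' - y)) by (apply Rmult_le_pos; nra).
  apply div_le_div_of_mul_le; nra.
Qed.

Definition y_min : R := mobius P (c_low P).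
Definition y_max : R := affine P (c_high P).

(* Decision points are chosen so that from sides 2 and 3 the process always returns to side 1. *)
Definition decision (c : R) : R * R * R :=
  (ratio_point c, side2_point y_max / 2, 1 - side3_gap y_min / 2).

Definition base_point (c : R) (n : nat) : R := orbit P c (mobius P c) n.

Definition triangle_orbit (c : R) (t : nat) : state :=
  let y := base_point c (Nat.div2 t) in
  if Nat.even t then (S1, ratio_point y)
  else if Rlt_dec y c then (S2, side2_point y) else (S3, 1 - side3_gap y).

Lemma triangle_orbit_even c n : triangle_orbit c (2 * n) = (S1, ratio_point (base_point c n)).
Proof. unfold triangle_orbit. now rewrite Nat.even_mul, Nat.div2_double. Qed.

Lemma triangle_orbit_odd c n : triangle_orbit c (S (2 * n)) =
  if Rlt_dec (base_point c n) c then (S2, side2_point (base_point c n))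
  else (S3, 1 - side3_gap (base_point c n)).
Proof. unfold triangle_orbit. now rewrite Nat.even_succ, Nat.odd_mul, Nat.div2_succ_double. Qed.

Section FixedDecision.

Variable c : R.
Hypothesis Hc : c_low P <= c <= c_high P.

Let Hvalid := triangle_params_valid.

Lemma admissible_between : admissible P c.
Proof. apply (admissible_le P Hvalid (c_low P)); [apply admissible_c_low, Hvalid | easy]. Qed.

Lemma base_point_bounds n : 0 < y_min /\ y_min <= base_point c n < y_max.
Proof.
  pose proof admissible_between as Hadm.
  pose proof (admissible_c_low P Hvalid) as Hlow.
  destruct (orbit_in_window P Hvalid c (mobius P c) n Hadm (mobius_in_window P Hvalid c Hadm))
    as [Hlo Hhi].
  fold (base_point c n) in Hlo, Hhi. unfold y_min, y_max.
  pose proof (mobius_pos P Hvalid _ (proj1 Hlow)).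
  pose proof (mobius_le P Hvalid (c_low P) c (Rlt_le _ _ (proj1 Hlow)) (proj1 Hc)).
  pose proof (affine_le P Hvalid c (c_high P) (proj2 Hc)).
  lra.
Qed.

Lemma decision_in_unit i : 0 < dfun (decision c) i < 1.
Proof.
  pose proof (base_point_bounds 0).
  destruct i; simpl.
  - apply ratio_point_in_unit. pose proof admissible_between as [? _]. lra.
  - pose proof (side2_point_in_unit y_max ltac:(lra)). lra.
  - pose proof (side3_gap_in_unit y_min ltac:(lra)). lra.
Qed.

Lemma triangle_orbit_in_unit t : 0 <= snd (triangle_orbit c t) <= 1.
Proof.
  destruct (Nat.Even_or_Odd t) as [[n ->] | [n ->]].
  - rewrite triangle_orbit_even. pose proof (base_point_bounds n).
    pose proof (ratio_point_in_unit (base_point c n) ltac:(lra)). simpl. lra.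
  - rewrite Nat.add_1_r, triangle_orbit_odd. pose proof (base_point_bounds n).
    destruct (Rlt_dec _ _); simpl.
    + pose proof (side2_point_in_unit (base_point c n) ltac:(lra)). lra.
    + pose proof (side3_gap_in_unit (base_point c n) ltac:(lra)). lra.
Qed.

Lemma triangle_orbit_leave_S1 n : exists j,
  rule (dfun (decision c)) (triangle_orbit c (2 * n)) j /\
  forall l, emb (triangle_orbit c (S (2 * n))) l
            = Defs.f lam mu j (emb (triangle_orbit c (2 * n))) l.
Proof.
  rewrite triangle_orbit_even, triangle_orbit_odd.
  pose proof (base_point_bounds n) as Hy. pose proof admissible_between as [Hc0 _].
  set (y := base_point c n) in *.
  destruct (Rlt_dec y c) as [Hyc | Hyc].
  - exists S2. split; [| apply f_S1_to_S2; lra].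
    left. split; [apply ratio_point_increasing |]; simpl; auto; lra.
  - exists S3. split; [| apply f_S1_to_S3; lra].
    right. destruct (Req_dec y c) as [-> | Hne].
    + right. simpl. auto.
    + left. split; [apply ratio_point_increasing |]; simpl; auto; lra.
Qed.

Lemma triangle_orbit_return_S1 n : exists j,
  rule (dfun (decision c)) (triangle_orbit c (S (2 * n))) j /\
  forall l, emb (triangle_orbit c (S (S (2 * n)))) l
            = Defs.f lam mu j (emb (triangle_orbit c (S (2 * n)))) l.
Proof.
  replace (S (S (2 * n))) with (2 * S n)%nat by lia.
  rewrite triangle_orbit_even, triangle_orbit_odd.
  pose proof (base_point_bounds n) as Hy.
  assert (Hnext : base_point c (S n) = gap_map P c (base_point c n)) by reflexivity.
  set (y := base_point c n) in *.
  exists S1. destruct (Rlt_dec y c) as [Hyc | Hyc].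
  - split; [| rewrite Hnext, gap_map_affine by easy; apply f_S2_to_S1; lra].
    right. left. split; [| easy]. simpl.
    pose proof (side2_point_antitone y y_max ltac:(lra) ltac:(lra)).
    pose proof (side2_point_in_unit y_max ltac:(lra)). lra.
  - split; [| rewrite Hnext, gap_map_mobius by lra; apply f_S3_to_S1; lra].
    left. split; [| easy]. simpl.
    pose proof (side3_gap_monotone y_min y ltac:(lra) ltac:(lra)).
    pose proof (side3_gap_in_unit y_min ltac:(lra)). lra.
Qed.

Lemma triangle_orbit_trajectory : trajectory lam mu (dfun (decision c)) (triangle_orbit c).
Proof.
  split; [apply triangle_orbit_in_unit |].
  intros t. destruct (Nat.Even_or_Odd t) as [[n ->] | [n ->]].
  - apply triangle_orbit_leave_S1.
  - rewrite Nat.add_1_r. apply triangle_orbit_return_S1.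
Qed.

Lemma triangle_orbit_side_odd n :
  Side (triangle_orbit c (S (2 * n))) = if Rlt_dec (base_point c n) c then S2 else S3.
Proof. rewrite triangle_orbit_odd. now destruct (Rlt_dec _ _). Qed.

(* At odd times the side (2 or 3) is the itinerary letter of the base orbit, and at even
   times it is 1; so an eventually periodic side sequence forces a rational rotation number. *)
Lemma triangle_orbit_nonperiodic : ~ nat_ratio (rot P c) -> nonperiodic (triangle_orbit c).
Proof.
  intros Hirr m Hm [N0 HN]. unfold Side in HN.
  destruct (Nat.Even_or_Odd m) as [[k ->] | [k ->]].
  - apply Hirr, (rot_nat_ratio_of_periodic P Hvalid c N0 k admissible_between ltac:(lia)).
    intros j Hj. specialize (HN (S (2 * j)) ltac:(lia)).
    replace (S (2 * j) + 2 * k)%nat with (S (2 * (j + k))) in HN by lia.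
    pose proof (triangle_orbit_side_odd (j + k)) as E1.
    pose proof (triangle_orbit_side_odd j) as E2.
    unfold Side in E1, E2. rewrite HN, E2 in E1. unfold base_point in E1. unfold letter.
    destruct (Rlt_dec (orbit P c (mobius P c) (j + k)) c), (Rlt_dec (orbit P c (mobius P c) j) c);
      easy.
  - specialize (HN (2 * N0)%nat ltac:(lia)).
    replace (2 * N0 + (2 * k + 1))%nat with (S (2 * (N0 + k))) in HN by lia.
    rewrite triangle_orbit_odd, triangle_orbit_even in HN. destruct (Rlt_dec _ _); discriminate.
Qed.

End FixedDecision.

Lemma decision_set_uncountable :
  uncountable_set (fun d => exists c,
    c_low P <= c <= c_high P /\ ~ nat_ratio (rot P c) /\ d = decision c).
Proof.
  intros Hcount.
  apply (non_ratio_interval_uncountable (1 / 3) (1 / 2)); [lra |].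
  eapply countable_subset;
    [| apply (countable_image _ (fun d => rot P (fst (fst d) / (1 - fst (fst d)))) Hcount)].
  intros r [Hr Hnr].
  destruct (rot_attains P triangle_params_valid r Hr) as [c [Hc <-]].
  exists (decision c). split; [now exists c |]. simpl.
  rewrite ratio_point_inv; [easy |]. pose proof (admissible_between c Hc) as [? _]. lra.
Qed.

End Triangle.

Theorem theorem3p3 (lam mu : side -> R) :
  (forall i, 0 < lam i) -> (forall i, 0 < mu i) ->
  (forall i, lam i / mu i < 1) ->
  lam S1 / mu S1 + lam S2 / mu S2 + lam S3 / mu S3 > 1 ->
  exists DS : R * R * R -> Prop,
    uncountable_set DS /\
    forall d, DS d ->
      (forall i, 0 < dfun d i < 1) /\
      exists z : nat -> state, trajectory lam mu (dfun d) z /\ nonperiodic z.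
Proof.
  intros Hlam Hmu Hrho _.
  assert (Hlt : forall i, lam i < mu i).
  { intros i. specialize (Hrho i). specialize (Hmu i).
    replace (lam i) with (lam i / mu i * mu i) by (field; lra). nra. }
  eexists. split; [apply (decision_set_uncountable lam mu Hlam Hlt) |].
  intros d (c & Hc & Hirr & ->). split; [now apply decision_in_unit |].
  exists (triangle_orbit lam mu c). split.
  - now apply triangle_orbit_trajectory.
  - now apply triangle_orbit_nonperiodic.
Qed.
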